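(* Let $n\geq 2$. Identify $H^\ast(BSO(2n-1))$ with the subring $\mathbb{Z}/2[\widehat{\omega_2},\dots,\widehat{\omega_{2n-1}}]$ of $H^\ast(BSO(2n))=\mathbb{Z}/2[\widehat{\omega_2},\dots,\widehat{\omega_{2n}}]$, so that $H^\ast(BSO(2n))\cong\bigoplus_{k\ge0}H^\ast(BSO(2n-1))\,\widehat{\omega_{2n}}^{k}$. Then for every $k\geq1$, $H^\ast(BSO(2n-1))\,\widehat{\omega_{2n}}^{k}$ is an $E$-submodule of $\tilde{H}^\ast(BSO(2n))$, and $\tilde{H}^\ast(BSO(2n-1))$ is an $E$-submodule of $\tilde{H}^\ast(BSO(2n))$.
   Context: Cohomology is with $\mathbb{Z}/2$ coefficients; $\widehat{\omega_i}$ denotes the $i$-th Stiefel–Whitney class. $E=\mathbb{Z}/2\langle Q_0,Q_1\rangle$ is the exterior subalgebra of the mod 2 Steenrod algebra generated by the Milnor primitives $Q_0=Sq^1$ and $Q_1=Sq^3+Sq^2Sq^1$, acting on cohomology via Steenrod operations. *)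

From HB Require Import structures.
From mathcomp Require Import all_boot all_order all_algebra.
From mathcomp Require Import mpoly.
Set Implicit Arguments. Unset Strict Implicit. Unset Printing Implicit Defensive.
Import GRing.Theory.
Local Open Scope ring_scope.

(* Algebraic model of H^*(BSO(N); Z/2) = Z/2[w_2, ..., w_N]:
   the polynomial ring over 'F_2 in N-1 variables, variable i standing for
   the Stiefel-Whitney class w_(i+2). *)
Definition HBSO (N : nat) := {mpoly 'F_2[N.-1]}.

Definition sw (N k : nat) : HBSO N :=
  if k == 0%N then 1 else
  if (2 <= k)%N then
    match (insub (k - 2)%N : option 'I_(N.-1)) with
    | Some i => 'X_i
    | None => 0
    end
  else 0.

(* Wu formula: Sq^a(w_j) = sum_{t=0}^{a} C(j-a+t-1, t) w_(a-t) w_(j+t)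
   for a <= j, and Sq^a(w_j) = 0 for a > j. *)
Definition wu (N a j : nat) : HBSO N :=
  if (a <= j)%N then
    \sum_(t < a.+1) ('C(j - a + t - 1, t))%:R * sw N (a - t) * sw N (j + t)
  else 0.

(* Total Steenrod square Sq_t = sum_a t^a Sq^a, the ring homomorphism
   determined (Cartan formula) by its values on the generators w_j. *)
Definition totSq (N : nat) (p : HBSO N) : {poly HBSO N} :=
  mmap (fun c : 'F_2 => (c%:MP)%:P)
       (fun i : 'I_(N.-1) => \sum_(a < (i + 2).+1) 'X^a * (wu N a (i + 2))%:P) p.

Definition Sq (N a : nat) (p : HBSO N) : HBSO N := (totSq p)`_a.

Definition Q0 (N : nat) (p : HBSO N) : HBSO N := Sq 1 p.
Definition Q1 (N : nat) (p : HBSO N) : HBSO N := Sq 3 p + Sq 2 (Sq 1 p).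

Definition reduced (N : nat) (p : HBSO N) : Prop := p@_0%MM = 0.

(* S is an E-submodule of the reduced cohomology H~^*(BSO(N)), E = <Q0,Q1>
   over Z/2 (closure under 0, +, Q0, Q1; scalars in Z/2 are then automatic). *)
Definition E_submodule_reduced (N : nat) (S : HBSO N -> Prop) : Prop :=
  (forall x, S x -> reduced x) /\
  S 0 /\ (forall x y, S x -> S y -> S (x + y)) /\
  (forall x, S x -> S (Q0 x)) /\ (forall x, S x -> S (Q1 x)).

Definition incl (M N : nat) (p : HBSO M) : HBSO N :=
  mmap (fun c : 'F_2 => c%:MP) (fun i : 'I_(M.-1) => sw N (i + 2)) p.

From HB Require Import structures.
From mathcomp Require Import all_boot all_order all_algebra.
From mathcomp Require Import mpoly.
From mathcomp Require Import zify ring.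
Set Implicit Arguments. Unset Strict Implicit. Unset Printing Implicit Defensive.
Import GRing.Theory.
Local Open Scope ring_scope.

(* Q0 = Sq^1 and Q1 = Sq^3 + Sq^2 Sq^1 are derivations (Cartan formula and
   Sq^1 Sq^1 = 0), so they are determined by their values on the generators,
   which the Wu formula gives mod 2 as Q0 w_m = (m-1) w_(m+1) and
   Q1 w_m = w_3 w_m + c_m w_(m+3) with explicit integers c_m.  For m <= 2n-1
   the class w_(2n) can only appear there with an even coefficient, so both
   derivations preserve the subring H^*(BSO(2n-1)); and since
   w_(2n+1) = w_(2n+3) = 0 we get Q0 w_(2n) = 0 and Q1 w_(2n) = w_3 w_(2n),
   whence by the Leibniz rule they map H^*(BSO(2n-1)) w_(2n)^k into itself.
   All values on generators have zero constant term, so Q0 and Q1 land in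
   reduced cohomology. *)

Lemma mpoly_ind_ring (n : nat) (R : nzRingType) (P : {mpoly R[n]} -> Prop) :
  (forall c, P c%:MP) -> (forall i, P 'X_i) ->
  (forall p q, P p -> P q -> P (p + q)) ->
  (forall p q, P p -> P q -> P (p * q)) ->
  forall p, P p.
Proof.
move=> PC PX PD PM; elim/mpolyind => [|c m p _ _ Pp]; first by rewrite -mpolyC0.
apply: (PD) => //; rewrite -mul_mpolyC mpolyXE_id; apply: (PM) => //.
have P1 : P 1 by rewrite -mpolyC1.
apply: (big_ind P P1 PM) => i _.
by elim: (m i) => [|e IHe]; rewrite ?expr0 // exprS; apply: (PM).
Qed.

Lemma pchar2_HBSO (N : nat) : 2 \in [pchar (HBSO N)].
Proof. by rewrite (pchar_lalg (HBSO N)) pchar_Fp. Qed.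

Lemma mulrn_pchar2 (N : nat) (x : HBSO N) k : x *+ k = x *+ odd k.
Proof.
rewrite -{1}(odd_double_half k) mulrnDr -mul2n mulrnA.
by rewrite (mulrn_pchar (pchar2_HBSO N)) mul0rn addr0.
Qed.

HB.instance Definition _ (N : nat) :=
  GRing.RMorphism.copy (@totSq N)
    (mmap (polyC \o @mpolyC _ _)
       (fun i : 'I_N.-1 => \sum_(a < (i + 2).+1) 'X^a * (wu N a (i + 2))%:P)).

HB.instance Definition _ (M N : nat) :=
  GRing.RMorphism.copy (@incl M N)
    (mmap (@mpolyC _ _) (fun i : 'I_M.-1 => sw N (i + 2))).

Section StiefelWhitney.
Variable K : nat.

Lemma sw_X (i : 'I_K.-1) : sw K (i + 2) = 'X_i.
Proof. by rewrite /sw addn2 /= subn2 /= valK. Qed.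

Lemma sw_gt m : (K < m)%N -> sw K m = 0.
Proof.
move=> ltKm; rewrite /sw; case: eqP => [m0|_]; first by move: ltKm; rewrite m0.
by case: ifP => // _; rewrite insubF //; apply/negbTE; rewrite -leqNgt; lia.
Qed.

Lemma sw_reduced m : (2 <= m)%N -> reduced (sw K m).
Proof.
move=> le2m; have [lt_m|ge_m] := ltnP (m - 2) K.-1.
  by rewrite -(subnK le2m) -[(m - 2)%N]/(val (Ordinal lt_m)) sw_X /reduced mcoeffX mnm1_eq0.
by rewrite sw_gt ?/reduced ?mcoeff0 //; lia.
Qed.

Lemma wu1 m : (1 <= m)%N -> wu K 1 m = sw K (m + 1) *+ (m - 1).
Proof.
move=> le1m; rewrite /wu le1m !big_ord_recr big_ord0 /= add0r mulr0 mul0r add0r.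
by rewrite bin1 mulr1 mulr_natl; congr (_ *+ _); lia.
Qed.

Lemma wu2 m : (2 <= m)%N -> wu K 2 m = sw K 2 * sw K m + sw K (m + 2) *+ 'C(m - 1, 2).
Proof.
move=> le2m; rewrite /wu le2m !big_ord_recr big_ord0 /= add0r mulr0 mul0r addr0.
rewrite bin0 mul1r addn0 mulr1 mulr_natl.
by congr (_ + _ *+ 'C(_, _)); lia.
Qed.

Lemma wu3 m : (3 <= m)%N -> wu K 3 m =
  sw K 3 * sw K m + (sw K 2 * sw K (m + 1)) *+ (m - 3) + sw K (m + 3) *+ 'C(m - 1, 3).
Proof.
move=> le3m; rewrite /wu le3m !big_ord_recr big_ord0 /= add0r mulr0 mul0r addr0.
rewrite bin0 mul1r addn0 bin1 mulr1 !mulr_natl -mulrnAl.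
by congr (_ + _ *+ _ * _ + _ *+ 'C(_, _)); lia.
Qed.

End StiefelWhitney.

(* Conversion checks made by [rewrite] would unfold [Sq] into the whole
   polynomial computation; working with a locked copy keeps them cheap. *)
Definition sq (N : nat) : nat -> HBSO N -> HBSO N := locked (@Sq N).

Lemma sqE (N : nat) : @sq N = @Sq N.
Proof. by rewrite /sq -lock. Qed.

Section SteenrodSquares.
Variable N : nat.
Implicit Types p q : HBSO N.

Lemma sqD a p q : sq a (p + q) = sq a p + sq a q.
Proof. by rewrite sqE /Sq rmorphD coefD. Qed.

Lemma sqMn a p k : sq a (p *+ k) = sq a p *+ k.
Proof. by rewrite sqE /Sq rmorphMn coefMn. Qed.

Lemma sq_mul a p q : sq a (p * q) = \sum_(i < a.+1) sq i p * sq (a - i) q.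
Proof. by rewrite sqE /Sq rmorphM coefM. Qed.

Lemma sqC a c : sq a (c%:MP : HBSO N) = if a == 0%N then c%:MP else 0.
Proof. by rewrite sqE /Sq /totSq (@mmapC _ _ _ _ (polyC \o @mpolyC _ _)) coefC. Qed.

Lemma sq_zero a : sq a (0 : HBSO N) = 0.
Proof. by rewrite -mpolyC0 sqC; case: eqP. Qed.

Lemma sq_sw a m : (2 <= m)%N -> sq a (sw N m) = wu N a m.
Proof.
move=> le2m; have [lt_m|ge_m] := ltnP (m - 2) N.-1; last first.
  rewrite sw_gt ?sq_zero; last by lia.
  rewrite /wu; case: leqP => // _; rewrite big1 // => t _.
  by rewrite (sw_gt (m := m + t)) ?mulr0 //; lia.
rewrite -(subnK le2m) -[(m - 2)%N]/(val (Ordinal lt_m)) sw_X.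
rewrite sqE /Sq /totSq (@mmapX _ _ _ _ (polyC \o @mpolyC _ _)) mmap1U.
rewrite (eq_bigr (fun b : 'I_(_).+1 => wu N b (Ordinal lt_m + 2) *: 'X^b)) => [|b _]; last first.
  by rewrite mulrC mul_polyC.
rewrite -(poly_def _ (fun b => wu N b _)) coef_poly ltnS.
by case: leqP => // lt; rewrite /wu leqNgt lt.
Qed.

Lemma sq0 p : sq 0 p = p.
Proof.
elim/mpoly_ind_ring: p => [c|i|p q IHp IHq|p q IHp IHq].
- by rewrite sqC.
- by rewrite -sw_X sq_sw ?leq_addl // /wu big_ord1 bin0 addn0 /= !mul1r.
- by rewrite sqD IHp IHq.
- by rewrite sq_mul big_ord1 IHp IHq.
Qed.

Lemma sq1M p q : sq 1 (p * q) = sq 1 p * q + p * sq 1 q.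
Proof. by rewrite sq_mul !big_ord_recr big_ord0 /= add0r !sq0 addrC. Qed.

Lemma sq1_sw m : (2 <= m)%N -> sq 1 (sw N m) = sw N (m + 1) *+ (m - 1).
Proof. by move=> le2m; rewrite sq_sw // wu1 // ltnW. Qed.

Lemma sq1_sq1 p : sq 1 (sq 1 p) = 0.
Proof.
elim/mpoly_ind_ring: p => [c|i|p q IHp IHq|p q IHp IHq].
- by rewrite sqC sq_zero.
- rewrite -sw_X sq1_sw ?leq_addl // sqMn sq1_sw; last by lia.
  rewrite -mulrnA mulrn_pchar2 oddM addnK addn2 subn1 /=.
  by case: (odd i).
- by rewrite !sqD IHp IHq addr0.
- rewrite sq1M sqD !sq1M IHp IHq mul0r mulr0 add0r addr0 addrC.
  exact: (addrr_pchar2 (pchar2_HBSO N)).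
Qed.

Lemma Q1M p q : Q1 (p * q) = Q1 p * q + p * Q1 q.
Proof.
rewrite /Q1 -sqE sq1M sqD !sq_mul !big_ord_recr big_ord0 /= !add0r !sq0 !sq1_sq1.
rewrite !mul0r !mulr0 !addr0 !big_ord0 !add0r !subn0.
rewrite -[RHS]addr0 -(mulrn_pchar (pchar2_HBSO N) (sq 1 p * sq 2 q + sq 2 p * sq 1 q)).
ring.
Qed.

End SteenrodSquares.

Section Derivations.
Variables (n : nat) (R : comNzRingType).
Implicit Types (D : {mpoly R[n]} -> {mpoly R[n]}) (p w z : {mpoly R[n]}).

Definition derivation D : Prop :=
  [/\ {morph D : p q / p + q}, forall p q, D (p * q) = D p * q + p * D q
    & forall c, D c%:MP = 0].

Lemma derivation_mcoeff0 D :
  derivation D -> (forall i, (D 'X_i)@_0 = 0) -> forall p, (D p)@_0 = 0.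
Proof.
case=> DD DM DC DX; elim/mpoly_ind_ring => [c|//|p q IHp IHq|p q IHp IHq].
- by rewrite DC mcoeff0.
- by rewrite DD mcoeffD IHp IHq addr0.
- by rewrite DM mcoeffD !rmorphM /= IHp IHq mulr0 mul0r addr0.
Qed.

Lemma derivation_expr D w z :
  derivation D -> D w = z * w -> forall k, D (w ^+ k) = z *+ k * w ^+ k.
Proof.
case=> _ DM DC Dw; elim => [|k IHk]; first by rewrite expr0 -mpolyC1 DC mul0r.
by rewrite exprSr DM IHk Dw mulrSr; set u := z *+ k; ring.
Qed.

End Derivations.

Lemma Q0_derivation (K : nat) : derivation (@Q0 K).
Proof.
by rewrite /Q0 -sqE; split=> [p q|p q|c]; [exact: sqD | exact: sq1M | rewrite sqC].
Qed.

Lemma Q1_derivation (K : nat) : derivation (@Q1 K).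
Proof.
split=> [p q|p q|c].
- by rewrite /Q1 -sqE !sqD addrACA.
- exact: Q1M.
- by rewrite /Q1 -sqE !sqC /= addr0.
Qed.

(* Coefficient of w_(m+3) in Sq^3 w_m + Sq^2 Sq^1 w_m; the two w_2 w_(m+1)
   terms cancel mod 2. *)
Definition q1_coef (m : nat) : nat := 'C(m - 1, 3) + 'C(m, 2) * (m - 1).

Section MilnorPrimitives.
Variable K : nat.

Lemma Q0_sw m : (2 <= m)%N -> Q0 (sw K m) = sw K (m + 1) *+ (m - 1).
Proof. by rewrite /Q0 -sqE; apply: sq1_sw. Qed.

Lemma Q1_sw m : (2 <= m)%N ->
  Q1 (sw K m) = sw K 3 * sw K m + sw K (m + 3) *+ q1_coef m.
Proof.
move=> le2m; have le2m1 : (2 <= m + 1)%N by rewrite addn1 ltnW.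
rewrite /Q1 -sqE sq1_sw // sqMn (sq_sw _ 2 le2m1) wu2 // -addnA addnK.
rewrite /q1_coef mulrnDl -mulrnA mulrnDr addrA.
have [->|ne2m] := eqVneq m 2%N.
  (* Sq^3 w_2 = 0 *)
  by rewrite sq_sw // /wu /= add0r (bin_small (n := 1)) // mulr0n add0r mulrC.
rewrite sq_sw // wu3; last by lia.
set A := sw K 3 * sw K m; set B := sw K 2 * sw K (m + 1); set C := sw K (m + 3).
have B_cancel : B *+ (m - 3) + B *+ (m - 1) = 0.
  by rewrite -mulrnDr mulrn_pchar2 (_ : m - 3 + (m - 1) = (m - 2).*2)%N ?odd_double //; lia.
rewrite -[RHS]addr0 -B_cancel; ring.
Qed.

Lemma Q0_reduced (x : HBSO K) : reduced (Q0 x).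
Proof.
apply: derivation_mcoeff0 (Q0_derivation K) _ x => i.
by rewrite -sw_X Q0_sw ?leq_addl // mcoeffMn (sw_reduced K) ?mul0rn //; lia.
Qed.

Lemma Q1_reduced (x : HBSO K) : reduced (Q1 x).
Proof.
apply: derivation_mcoeff0 (Q1_derivation K) _ x => i.
rewrite -sw_X Q1_sw ?leq_addl // mcoeffD mcoeffMn rmorphM /=.
by rewrite !(sw_reduced K) ?mulr0 ?mul0rn ?addr0 //; lia.
Qed.

End MilnorPrimitives.

Definition in_image (A B : Type) (f : A -> B) (y : B) : Prop := exists x, y = f x.

Section RingImage.
Variables (A : nzRingType) (n : nat) (R : comNzRingType).
Variable f : {rmorphism A -> {mpoly R[n]}}.
Implicit Types (y z w : {mpoly R[n]}).

Lemma in_image0 : in_image f 0.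
Proof. by exists 0; rewrite rmorph0. Qed.

Lemma in_imageD y z : in_image f y -> in_image f z -> in_image f (y + z).
Proof. by move=> [a ->] [b ->]; exists (a + b); rewrite rmorphD. Qed.

Lemma in_imageM y z : in_image f y -> in_image f z -> in_image f (y * z).
Proof. by move=> [a ->] [b ->]; exists (a * b); rewrite rmorphM. Qed.

Lemma in_imageMn y k : in_image f y -> in_image f (y *+ k).
Proof. by move=> [a ->]; exists (a *+ k); rewrite rmorphMn. Qed.

Lemma derivation_image_mul_expr D w z : derivation D ->
    (forall a, in_image f (D (f a))) -> in_image f z -> D w = z * w ->
  forall k y, (exists a, y = f a * w ^+ k) -> exists a, D y = f a * w ^+ k.
Proof.
move=> Dder Dimf [c ->] Dw k _ [a ->]; have [_ DM _] := Dder.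
have [b Da] := Dimf a; exists (b + a * c *+ k).
rewrite DM (derivation_expr Dder Dw) Da rmorphD rmorphMn rmorphM.
by rewrite mulrDl mulrA mulrnAr.
Qed.

End RingImage.

Section Inclusion.
Variables M N : nat.
Implicit Types (p : HBSO M) (x : HBSO N).

Lemma incl_C c : incl N (c%:MP : HBSO M) = c%:MP.
Proof. exact: (@mmapC _ _ _ _ (@mpolyC _ _)). Qed.

Lemma incl_X (i : 'I_M.-1) : incl N 'X_i = sw N (i + 2).
Proof. by rewrite /incl (@mmapX _ _ _ _ (@mpolyC _ _)) mmap1U. Qed.

Lemma incl_sw m : (m <= M)%N -> incl N (sw M m) = sw N m.
Proof.
case: m => [|[|m]] le_mM; [exact: rmorph1 | exact: rmorph0 |].
have lt_m : (m < M.-1)%N by lia.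
by rewrite -addn2 -[m]/(val (Ordinal lt_m)) sw_X incl_X.
Qed.

Lemma in_incl_sw m : (m <= M)%N -> in_image (@incl M N) (sw N m).
Proof. by move=> le_mM; exists (sw M m); rewrite incl_sw. Qed.

(* Rewriting with an equation between two [incl] terms would make [rewrite]
   compare them by unfolding [incl]; [f_equal2] sidesteps this. *)
Lemma mcoeff0_incl p : (incl N p)@_0 = p@_0.
Proof.
elim/mpoly_ind_ring: p => [c|i|p q IHp IHq|p q IHp IHq].
- by rewrite incl_C !mcoeffC !eqxx.
- by rewrite incl_X (sw_reduced N) ?leq_addl // mcoeffX mnm1_eq0.
- by rewrite (rmorphD (@incl M N)) !mcoeffD; exact: f_equal2 IHp IHq.
- by rewrite (rmorphM (@incl M N)) !(rmorphM (mcoeff 0%MM)); exact: f_equal2 IHp IHq.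
Qed.

Lemma in_incl_reduced x :
  in_image (@incl M N) x -> reduced x -> exists p, reduced p /\ x = incl N p.
Proof. by move=> [p ->] x0; exists p; rewrite /reduced -mcoeff0_incl. Qed.

Lemma derivation_incl D : derivation D ->
    (forall m, (2 <= m <= M)%N -> in_image (@incl M N) (D (sw N m))) ->
  forall p, in_image (@incl M N) (D (incl N p)).
Proof.
case=> DD DM DC Dsw; elim/mpoly_ind_ring => [c|i|p q IHp IHq|p q IHp IHq].
- by rewrite incl_C DC; apply: in_image0.
- by rewrite incl_X; apply: Dsw; have := ltn_ord i; lia.
- by rewrite (rmorphD (@incl M N)) DD; apply: in_imageD; [exact: IHp | exact: IHq].
- rewrite (rmorphM (@incl M N)) DM.
  by apply: in_imageD; apply: in_imageM; [exact: IHp | exists q | exists p | exact: IHq].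
Qed.

End Inclusion.

Lemma odd_bin_double3 j : odd 'C(j.*2, 3) = false.
Proof.
elim: j => [//|j IHj]; rewrite doubleS !binS bin1 !oddD IHj odd_double /=.
by case: (odd _).
Qed.

Lemma odd_q1_coef j : odd (q1_coef j.*2.+1) = false.
Proof. by rewrite /q1_coef subn1 /= oddD oddM odd_double andbF addbF odd_bin_double3. Qed.

Section EvenRank.
Variable n : nat.
Hypothesis le2n : (2 <= n)%N.
Local Notation N := (2 * n)%N.
Local Notation M := (2 * n - 1)%N.

Lemma in_incl_sw_mulrn m k : (m = N -> ~~ odd k) -> in_image (@incl M N) (sw N m *+ k).
Proof.
move=> oddk; have [lt_mN|lt_Nm|mN] := ltngtP m N.
- by apply: in_imageMn; apply: in_incl_sw; lia.
- by rewrite sw_gt // mul0rn; apply: in_image0.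
- by rewrite mulrn_pchar2 (negbTE (oddk mN)) mulr0n; apply: in_image0.
Qed.

Lemma Q0_sw_in_incl m : (2 <= m <= M)%N -> in_image (@incl M N) (Q0 (sw N m)).
Proof.
case/andP=> le2m le_mM; rewrite Q0_sw //; apply: in_incl_sw_mulrn => m1N.
by rewrite (_ : m - 1 = (n - 1).*2)%N ?odd_double //; lia.
Qed.

Lemma Q1_sw_in_incl m : (2 <= m <= M)%N -> in_image (@incl M N) (Q1 (sw N m)).
Proof.
case/andP=> le2m le_mM; rewrite Q1_sw //.
apply: in_imageD; first by apply: in_imageM; apply: in_incl_sw; lia.
apply: in_incl_sw_mulrn => m3N.
by rewrite (_ : m = (n - 2).*2.+1)%N ?odd_q1_coef //; lia.
Qed.

Lemma Q0_top : Q0 (sw N N) = 0.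
Proof. by rewrite Q0_sw ?sw_gt ?mul0rn //; lia. Qed.

Lemma Q1_top : Q1 (sw N N) = sw N 3 * sw N N.
Proof. by rewrite Q1_sw ?(sw_gt (m := N + 3)) ?mul0rn ?addr0 //; lia. Qed.

End EvenRank.

Theorem lemma1 (n : nat) (hn : (2 <= n)%N) :
  (forall k : nat, (1 <= k)%N ->
     E_submodule_reduced
       (fun x : HBSO (2 * n) =>
          exists p : HBSO (2 * n - 1), x = incl (2 * n) p * sw (2 * n) (2 * n) ^+ k))
  /\
  E_submodule_reduced
    (fun x : HBSO (2 * n) =>
       exists p : HBSO (2 * n - 1), reduced p /\ x = incl (2 * n) p).
Proof.
have le2N : (2 <= 2 * n)%N by lia.
have Q0_incl := derivation_incl (Q0_derivation _) (Q0_sw_in_incl hn).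
have Q1_incl := derivation_incl (Q1_derivation _) (Q1_sw_in_incl hn).
split=> [k k_gt0|]; (split; [|split; [|split; [|split]]]).
- move=> _ [p ->]; rewrite /reduced !(rmorphM (mcoeff 0%MM)) rmorphXn /=.
  by rewrite (sw_reduced _ le2N) expr0n eqn0Ngt k_gt0 mulr0.
- by exists 0; rewrite rmorph0 mul0r.
- by move=> _ _ [p ->] [q ->]; exists (p + q); rewrite rmorphD mulrDl.
- have Q0w : Q0 (sw (2 * n) (2 * n)) = 0 * sw (2 * n) (2 * n).
    by rewrite (Q0_top hn) mul0r.
  exact: derivation_image_mul_expr (Q0_derivation _) Q0_incl (in_image0 _) Q0w k.
- have w3_incl : in_image (@incl (2 * n - 1) (2 * n)) (sw (2 * n) 3).
    by apply: in_incl_sw; lia.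
  exact: derivation_image_mul_expr (Q1_derivation _) Q1_incl w3_incl (Q1_top hn) k.
- by move=> _ [p [p0 ->]]; rewrite /reduced mcoeff0_incl.
- by exists 0; rewrite /reduced mcoeff0 rmorph0.
- move=> _ _ [p [p0 ->]] [q [q0 ->]]; exists (p + q).
  by rewrite /reduced mcoeffD p0 q0 addr0 rmorphD.
- move=> _ [p [_ ->]]; apply: in_incl_reduced; [exact: Q0_incl | exact: Q0_reduced].
- move=> _ [p [_ ->]]; apply: in_incl_reduced; [exact: Q1_incl | exact: Q1_reduced].
Qed.
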